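(* Let $k\ge1$. (1) An element $g=(g_1,g_2)$ of $B_k$ lies in $G_k'$ if and only if $g_1,g_2\in G_{k-1}$ and $g_1g_2\in B_{k-1}'$. (2) Every element of $G_k'$ is a single commutator: $G_k'=\{[f_1,f_2]\mid f_1,f_2\in G_k\}$.
   Context: Let $C_2=\{e,\sigma\}$ with $\sigma=(1,2)$. Define $B_1=C_2$ and $B_k=B_{k-1}\wr C_2$ for $k>1$, with elements written as wreath recursions $(g_1,g_2)\pi$, $g_1,g_2\in B_{k-1}$, $\pi\in C_2$, and multiplication $(g_1,g_2)\pi\cdot(h_1,h_2)\rho=(g_1h_{\pi(1)},g_2h_{\pi(2)})\pi\rho$; $(g_1,g_2)$ denotes an element with $\pi=e$. Define $G_1=\{e\}$ and, for $k>1$, $G_k=\{(g_1,g_2)\pi\in B_k : g_1g_2\in G_{k-1}\}$ (so $G_k\cong\mathrm{Syl}_2A_{2^k}$). The commutator is $[a,b]=aba^{-1}b^{-1}$. *)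

From HB Require Import structures.
From mathcomp Require Import all_boot all_fingroup all_solvable.
Set Implicit Arguments. Unset Strict Implicit. Unset Printing Implicit Defensive.
Local Open Scope group_scope.

(* The permutational wreath product  gT wr C2 = (gT x gT) x| C2,
   elements (g1, g2, p) stand for the wreath recursion (g1,g2)pi with
   pi = sigma iff p = true. *)
Definition wrC2 (gT : finGroupType) := (gT * gT * bool)%type.
HB.instance Definition _ (gT : finGroupType) := Finite.on (wrC2 gT).

Section WrC2.
Variable gT : finGroupType.
Implicit Types x y z : wrC2 gT.

(* (g1,g2)pi * (h1,h2)rho = (g1 h_{pi(1)}, g2 h_{pi(2)}) pi rho *)
Definition wr_mul x y : wrC2 gT :=
  let: (g1, g2, p) := x in let: (h1, h2, r) := y in
  if p then (g1 * h2, g2 * h1, ~~ r) else (g1 * h1, g2 * h2, r).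
Definition wr_one : wrC2 gT := (1, 1, false).
Definition wr_inv x : wrC2 gT :=
  let: (g1, g2, p) := x in
  if p then (g2^-1, g1^-1, true) else (g1^-1, g2^-1, false).

Lemma wr_mulA : associative wr_mul.
Proof.
by case=> [[a1 a2] []] [[b1 b2] []] [[c1 c2] []]; rewrite /wr_mul /= ?mulgA.
Qed.
Lemma wr_mul1 : left_id wr_one wr_mul.
Proof. by case=> [[a1 a2] []]; rewrite /wr_mul /= !mul1g. Qed.
Lemma wr_mulV : left_inverse wr_one wr_inv wr_mul.
Proof. by case=> [[a1 a2] []]; rewrite /wr_mul /= !mulVg. Qed.

HB.instance Definition _ := Finite_isGroup.Build (wrC2 gT) wr_mulA wr_mul1 wr_mulV.
End WrC2.

Definition trivG : Type := unit.
HB.instance Definition _ := Finite.on trivG.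
Lemma triv_mulA : associative (fun _ _ : trivG => tt). Proof. by []. Qed.
Lemma triv_mul1 : left_id (tt : trivG) (fun _ _ : trivG => tt). Proof. by case. Qed.
Lemma triv_mulV : left_inverse (tt : trivG) (fun _ : trivG => tt) (fun _ _ : trivG => tt).
Proof. by []. Qed.
HB.instance Definition _ := Finite_isGroup.Build trivG triv_mulA triv_mul1 triv_mulV.

(* B n is the paper's B_n: B 0 is the trivial group (convention, only used
   as the base of the recursion), B 1 = {e} wr C2 ~= C2, B (n+1) = B n wr C2. *)
Fixpoint B (n : nat) : finGroupType :=
  match n with 0 => trivG | n'.+1 => wrC2 (B n') end.

(* G n is the paper's G_n : G_1 = {e},
   G_{n+1} = {(g1,g2)pi | g1 g2 \in G_n} for n >= 1.
   (G 0 = B 0 is the trivial group, only a convention.) *)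
Fixpoint G (n : nat) : {set B n} :=
  match n return {set B n} with
  | 0 => [set: B 0]
  | n'.+1 => [set x : wrC2 (B n') |
               if n' is 0 then x == 1 else (x.1.1 * x.1.2 \in G n')]
  end.

(* The paper's commutator convention [a,b] = a b a^-1 b^-1. *)
Definition pcomm (gT : finGroupType) (a b : gT) : gT := a * b * a^-1 * b^-1.

From HB Require Import structures.
From mathcomp Require Import all_boot all_fingroup all_solvable.
Set Implicit Arguments. Unset Strict Implicit. Unset Printing Implicit Defensive.
Local Open Scope group_scope.

(* Both (g1,g2)pi |-> pi and (g1,g2)pi |-> g1 g2 mod H' are homomorphisms of
   H wr C2 to abelian groups, so (H wr C2)' consists of pairs (g1,g2) with
   g1 g2 in H'.  G_k is the kernel of the sign character of B_k, and on G_k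
   the sign of the first coordinate is again a character, which kills G_k'.
   Conversely [(1,a)sigma, (b, g1 b)] = (g1, [a,b] g1^-1): once g2 g1 = [a,b]
   (by induction every element of B_m' is a commutator), (g1,g2) is a
   commutator, and since [a,b] = [ab,b] = [b^-1,bab^-1] we may take a even,
   which puts both factors in G_k. *)

Lemma pcommE (gT : finGroupType) (x y : gT) : pcomm x y = [~ x^-1, y^-1].
Proof. by rewrite /pcomm /commg /conjg !invgK !mulgA. Qed.

Section Z2Character.
Variables (gT : finGroupType) (H : {group gT}) (f : gT -> bool).
Hypothesis fM : {in H &, {morph f : x y / x * y >-> x (+) y}}.

Lemma z2char1 : f 1 = false.
Proof. by have := fM (group1 H) (group1 H); rewrite mulg1 addbb. Qed.

Lemma z2charV : {in H, forall x, f x^-1 = f x}.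
Proof.
move=> x Hx; have := fM (groupVr Hx) Hx.
by rewrite mulVg z2char1; case: (f x); case: (f x^-1).
Qed.

Definition z2ker := [set x in H | ~~ f x].

Lemma z2ker_group_set : group_set z2ker.
Proof.
apply/group_setP; split=> [|x y]; first by rewrite inE group1 z2char1.
rewrite !inE => /andP[Hx /negPf fx] /andP[Hy /negPf fy].
by rewrite groupM // fM // fx fy.
Qed.
Canonical z2ker_group := Group z2ker_group_set.

Lemma der1_sub_z2ker : [~: H, H] \subset z2ker.
Proof.
rewrite gen_subG; apply/subsetP => _ /imset2P[x y Hx Hy ->].
rewrite inE groupR // /commg /conjg !fM ?(groupV, groupM) // !z2charV //.
by case: (f x); case: (f y).
Qed.

End Z2Character.

Lemma pcomm_z2kerl (gT : finGroupType) (f : gT -> bool) :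
    {morph f : x y / x * y >-> x (+) y} ->
  forall a b : gT, exists a' b', ~~ f a' /\ pcomm a b = pcomm a' b'.
Proof.
move=> fM a b; case fa: (f a); last by exists a, b; rewrite fa.
have fV := z2charV (in2W fM) (in_setT _).
case fb: (f b).
  exists (a * b), b; rewrite fM fa fb; split=> //.
  by rewrite /pcomm invMg !mulgA mulgK.
exists b^-1, (b * a * b^-1); rewrite fV fb; split=> //.
by rewrite /pcomm !invMg !invgK !mulgA mulVg mul1g mulgKV.
Qed.

Section WreathC2.
Variable gT : finGroupType.
Implicit Types (a b g : gT) (x y : wrC2 gT).
Local Notation D := [~: [set: gT], [set: gT]].

Lemma wrC2_mulE a1 a2 p b1 b2 q :
  ((a1, a2, p) : wrC2 gT) * (b1, b2, q) =
  if p then (a1 * b2, a2 * b1, ~~ q) else (a1 * b1, a2 * b2, q).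
Proof. by []. Qed.

Lemma wrC2_mul11 x y : (x * y).1.1 = x.1.1 * (if x.2 then y.1.2 else y.1.1).
Proof. by case: x => [[a1 a2] []]; case: y => [[b1 b2] q]. Qed.

Lemma wrC2_signM : {morph (fun x : wrC2 gT => x.2) : x y / x * y >-> x (+) y}.
Proof. by case=> [[a1 a2] []] [[b1 b2] []]. Qed.

Let norm_der1 a : a \in 'N(D) := subsetP (der_norm 1 _) a (in_setT a).

Let abelian_der1 a b : commute (coset D a) (coset D b).
Proof.
by apply: (centsP (der_abelian 0 [set: gT])); rewrite mem_quotient ?inE.
Qed.

Lemma mem_der1_mulC a b : (a * b \in D) = (b * a \in D).
Proof. by rewrite -(memJ_norm _ (norm_der1 a)) conjgE mulgA mulKg. Qed.

Definition wrC2_abel x := coset D (x.1.1 * x.1.2).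

Lemma wrC2_abelM : {morph wrC2_abel : x y / x * y}.
Proof.
case=> [[a1 a2] []] [[b1 b2] q].
all: rewrite /wrC2_abel wrC2_mulE /= !morphM ?norm_der1 // -!mulgA.
all: congr (_ * _).
- by rewrite mulgA (abelian_der1 b2) -mulgA (abelian_der1 b2).
- by rewrite mulgA (abelian_der1 b1) -mulgA.
Qed.

Canonical wrC2_abel_morphism :=
  @Morphism _ _ [set: wrC2 gT] _ (in2W wrC2_abelM).

Lemma der1_wrC2_sub :
  [~: [set: wrC2 gT], [set: wrC2 gT]] \subset
  [set x | ~~ x.2 & x.1.1 * x.1.2 \in D].
Proof.
have sub_abel : [~: [set: wrC2 gT], [set: wrC2 gT]] \subset 'ker wrC2_abel.
  rewrite gen_subG; apply/subsetP => _ /imset2P[x y _ _ ->].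
  by rewrite !inE morphR ?inE //; apply/commgP/abelian_der1.
have sub_sign := @der1_sub_z2ker _ [set: wrC2 gT]%G _ (in2W wrC2_signM).
apply/subsetP => x Dx; rewrite inE.
have /setIdP[_ ->] := subsetP sub_sign x Dx.
have /mker abel1 := subsetP sub_abel x Dx.
exact: coset_idr (norm_der1 _) abel1.
Qed.

Lemma wrC2_pcomm_swap g1 g2 a b :
  g2 * g1 = pcomm a b ->
  (g1, g2, false) = pcomm ((1, a, true) : wrC2 gT) (b, g1 * b, false).
Proof.
move=> def_g21.
rewrite /pcomm !wrC2_mulE /= mul1g invg1 mulg1 mulgK invMg !mulgA.
by rewrite -[a * b * a^-1 * b^-1]/(pcomm a b) -def_g21 mulgK.
Qed.

Lemma der1_wrC2_pcomm :
    {in D, forall g, exists a b, g = pcomm a b} ->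
  {in [~: [set: wrC2 gT], [set: wrC2 gT]], forall x, exists u v, x = pcomm u v}.
Proof.
move=> pcommD x /(subsetP der1_wrC2_sub); rewrite inE.
case: x => [[g1 g2] []] //=; rewrite mem_der1_mulC.
case/pcommD=> a [b /wrC2_pcomm_swap ->].
by exists (1, a, true), (b, g1 * b, false).
Qed.

End WreathC2.

Lemma der1_B_pcomm m :
  {in [~: [set: B m], [set: B m]], forall z, exists a b, z = pcomm a b}.
Proof.
elim: m => [|m IHm] z; first by case: z => _; exists 1, 1; case: (pcomm _ _).
exact: der1_wrC2_pcomm.
Qed.

(* The sign of (g1,g2)pi as a permutation of the 2^m leaves: the swap at the
   root exchanges 2^(m-1) pairs of leaves, an odd number only when m = 1. *)
Fixpoint parity (m : nat) : B m -> bool :=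
  match m return B m -> bool with
  | 0 => fun _ => false
  | m'.+1 => fun x : wrC2 (B m') =>
      [&& m' == 0 & x.2] (+) parity x.1.1 (+) parity x.1.2
  end.

Lemma parityM m : {morph @parity m : x y / x * y >-> x (+) y}.
Proof.
elim: m => [|m IHm] //= [[a1 a2] p] [[b1 b2] q]; rewrite wrC2_mulE.
by case: p => /=; rewrite !IHm; case: (m == 0); case: q;
  case: (parity a1); case: (parity a2); case: (parity b1); case: (parity b2).
Qed.

Lemma mem_G m (x : B m) : (x \in G m) = ~~ parity x.
Proof.
elim: m x => [|[|m] IHm] x; rewrite inE //; first by case: x => [[[] []] []].
by rewrite IHm parityM.
Qed.

Lemma mem_GS n (g1 g2 : B n.+1) p :
  (((g1, g2, p) : B n.+2) \in G n.+2) = (parity g1 == parity g2).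
Proof. by rewrite mem_G -[parity _]/(parity g1 (+) parity g2) negb_add. Qed.

Lemma group_set_G m : group_set (G m).
Proof.
have -> : G m = z2ker [set: B m]%G (@parity m).
  by apply/setP => x; rewrite mem_G !inE.
by apply: z2ker_group_set => x y _ _; apply: parityM.
Qed.
Canonical G_group m := Group (group_set_G m).

Lemma G1_trivial : G 1 = 1.
Proof. by apply/setP => x; rewrite !inE. Qed.

Lemma parity_fst_morph n :
  {in G n.+2 &,
    {morph (fun x : B n.+2 => @parity n.+1 x.1.1) : x y / x * y >-> x (+) y}}.
Proof.
move=> x [[b1 b2] q] _; rewrite mem_GS wrC2_mul11 parityM => /eqP parity_b.
by case: x.2; rewrite ?parity_b.
Qed.

Lemma der1_G_sub n :
  [~: G n.+2, G n.+2] \subset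
  [set x : B n.+2 | [&& ~~ x.2, x.1.1 \in G n.+1, x.1.2 \in G n.+1
                     & x.1.1 * x.1.2 \in [~: [set: B n.+1], [set: B n.+1]]]].
Proof.
apply/subsetP => -[[g1 g2] p] Dx; rewrite inE /=.
have /subsetP/(_ _ Dx) := commgSS (subsetT (G n.+2)) (subsetT (G n.+2)).
move/(subsetP (der1_wrC2_sub _)); rewrite inE => /andP[-> D12].
have /setIdP[_ even1] := subsetP (der1_sub_z2ker (@parity_fst_morph n)) _ Dx.
have := subsetP (der1_subG _) _ Dx.
by rewrite mem_GS !(@mem_G n.+1) D12 even1 andbT => /eqP <-.
Qed.

Lemma pcomm_G_sub_der m :
  [set pcomm f1 f2 | f1 in G m, f2 in G m] \subset [~: G m, G m].
Proof.
by apply/subsetP => _ /imset2P[x y Gx Gy ->]; rewrite pcommE mem_commg ?groupV.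
Qed.

Lemma mem_pcomm_G n (g1 g2 : B n.+1) :
    g1 \in G n.+1 -> g2 \in G n.+1 ->
    g1 * g2 \in [~: [set: B n.+1], [set: B n.+1]] ->
  ((g1, g2, false) : B n.+2) \in [set pcomm f1 f2 | f1 in G n.+2, f2 in G n.+2].
Proof.
move=> G1 G2; rewrite mem_der1_mulC => /der1_B_pcomm[a0 [b0 def_g21]].
have [a [b [even_a def_ab]]] := pcomm_z2kerl (@parityM n.+1) a0 b0.
apply/imset2P; exists ((1, a, true) : B n.+2) ((b, g1 * b, false) : B n.+2).
- by rewrite mem_GS (negPf even_a) eqbF_neg -mem_G group1.
- by move: G1; rewrite mem_GS parityM mem_G => /negPf ->.
- by apply: wrC2_pcomm_swap; rewrite def_g21 def_ab.
Qed.

Theorem mainTheorem16 (n : nat) :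
  (forall g1 g2 : B n,
     ((g1, g2, false) : B n.+1) \in [~: G n.+1, G n.+1] <->
     [/\ g1 \in G n, g2 \in G n & g1 * g2 \in [~: [set: B n], [set: B n]]])
  /\
  [~: G n.+1, G n.+1] = [set pcomm f1 f2 | f1 in G n.+1, f2 in G n.+1].
Proof.
case: n => [|n].
  rewrite G1_trivial comm1G imset2_set1l imset_set1 /pcomm !(mulg1, invg1).
  split=> // g1 g2; case: g1; case: g2.
  by split=> _; rewrite ?inE //; split=> //; exact: group1.
have der_char (g1 g2 : B n.+1) :
    ((g1, g2, false) : B n.+2) \in [~: G n.+2, G n.+2] <->
    [/\ g1 \in G n.+1, g2 \in G n.+1
       & g1 * g2 \in [~: [set: B n.+1], [set: B n.+1]]].
  split=> [/(subsetP (der1_G_sub n)) | [G1 G2 D12]].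
    by rewrite inE => /and4P[].
  exact: subsetP (pcomm_G_sub_der _) _ (mem_pcomm_G G1 G2 D12).
split=> //; apply/eqP; rewrite eqEsubset pcomm_G_sub_der andbT.
apply/subsetP => x Dx; have := subsetP (der1_G_sub n) x Dx; rewrite inE.
by case: x Dx => [[g1 g2] []] //= _ /and3P[G1 G2 D12]; apply: mem_pcomm_G.
Qed.
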